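(* Let $F,H_1,\dots,H_m,G_1,\dots,G_n,F_{i,j}$ ($1\le i\le m$, $1\le j\le n$) be constant real symmetric $p\times p$ matrices and define $\mathcal{B}(\mathbf{x},\mathbf{y})=F+\sum_{i=1}^m x_iH_i+\sum_{j=1}^n y_jG_j+\sum_{i=1}^m\sum_{j=1}^n x_iy_jF_{i,j}$ for $\mathbf{x}\in\mathbb{R}^m,\mathbf{y}\in\mathbb{R}^n$. Let $\Gamma=\tfrac12(F_{i,j})_{i,j}$ be the $mp\times np$ block matrix with $(i,j)$ block $\tfrac12F_{i,j}$, $\Omega_1=(H_1\ \cdots\ H_m)$, $\Omega_2=(G_1\ \cdots\ G_n)$, and $M=\begin{pmatrix}0&\Gamma\\ \Gamma^{\mathsf T}&0\end{pmatrix}\in\mathcal{S}^{(m+n)p}$. Let $M=V^{\mathsf T}DV$ be an eigendecomposition with $V$ orthogonal and $D$ diagonal, let $D^+$ be obtained from $D$ by replacing negative entries with $0$, $D^-=D^+-D$, $M_1=V^{\mathsf T}D^+V$, $M_2=V^{\mathsf T}D^-V$. With $\mathbf{w}=\begin{pmatrix}\mathbf{x}\otimes I\\ \mathbf{y}\otimes I\end{pmatrix}$ ($I$ the $p\times p$ identity, $\mathbf{x},\mathbf{y}$ column vectors), define $\mathcal{B}^+(\mathbf{x},\mathbf{y})=\mathbf{w}^{\mathsf T}M_1\mathbf{w}+(\Omega_1\ \Omega_2)\mathbf{w}+F$ and $\mathcal{B}^-(\mathbf{x},\mathbf{y})=\mathbf{w}^{\mathsf T}M_2\mathbf{w}$.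 Then $\mathcal{B}(\mathbf{x},\mathbf{y})=\mathcal{B}^+(\mathbf{x},\mathbf{y})-\mathcal{B}^-(\mathbf{x},\mathbf{y})$ for all $(\mathbf{x},\mathbf{y})$, and both $\mathcal{B}^+$ and $\mathcal{B}^-$ are psd-convex on $\mathbb{R}^{m+n}$.
   Context: $\mathcal{S}^k$ is the space of real symmetric $k\times k$ matrices; $A\preceq B$ means $B-A$ is positive semidefinite. $\otimes$ is the Kronecker product. A matrix-valued function $\mathcal{C}\colon\mathbb{R}^N\to\mathcal{S}^p$ is psd-convex on a convex set $K$ if $\mathcal{C}(\mu\mathbf{z}_1+(1-\mu)\mathbf{z}_2)\preceq\mu\mathcal{C}(\mathbf{z}_1)+(1-\mu)\mathcal{C}(\mathbf{z}_2)$ for all $\mathbf{z}_1,\mathbf{z}_2\in K$, $\mu\in(0,1)$. *)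

From HB Require Import structures.
From mathcomp Require Import all_boot all_order all_algebra.
From mathcomp.real_closed Require Export mxtens.
Set Implicit Arguments. Unset Strict Implicit. Unset Printing Implicit Defensive.
Import Order.TTheory GRing.Theory Num.Theory.
Local Open Scope ring_scope.

(* Kronecker product: mxtens.tensmx, (A *t B) (i*p+k, j*q+l) = A i j * B k l. *)

Definition psd (R : realFieldType) (k : nat) (A : 'M[R]_k) : Prop :=
  A^T = A /\ forall v : 'cV[R]_k, 0 <= (v^T *m A *m v) 0 0.

Definition loewner_le (R : realFieldType) (k : nat) (A B : 'M[R]_k) : Prop :=
  psd (B - A).

Definition psd_convex_on (R : realFieldType) (N p : nat)
  (K : 'cV[R]_N -> Prop) (C : 'cV[R]_N -> 'M[R]_p) : Prop :=
  forall z1 z2 : 'cV[R]_N, K z1 -> K z2 -> forall mu : R, 0 < mu -> mu < 1 ->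
    loewner_le (C (mu *: z1 + (1 - mu) *: z2)) (mu *: C z1 + (1 - mu) *: C z2).

Section Construction.
Variables (R : realFieldType) (m n p : nat).

Definition Bfun (F : 'M[R]_p) (H : 'I_m -> 'M[R]_p) (G : 'I_n -> 'M[R]_p)
  (Fij : 'I_m -> 'I_n -> 'M[R]_p) (x : 'cV[R]_m) (y : 'cV[R]_n) : 'M[R]_p :=
  F + \sum_(i < m) x i 0 *: H i + \sum_(j < n) y j 0 *: G j
    + \sum_(i < m) \sum_(j < n) (x i 0 * y j 0) *: Fij i j.

Definition Gamma (Fij : 'I_m -> 'I_n -> 'M[R]_p) : 'M[R]_(m * p, n * p) :=
  \sum_(i < m) \sum_(j < n) tensmx (delta_mx i j : 'M[R]_(m, n)) ((2%:R)^-1 *: Fij i j).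

Definition Omega1 (H : 'I_m -> 'M[R]_p) : 'M[R]_(1 * p, m * p) :=
  \sum_(i < m) tensmx (delta_mx 0 i : 'M[R]_(1, m)) (H i).
Definition Omega2 (G : 'I_n -> 'M[R]_p) : 'M[R]_(1 * p, n * p) :=
  \sum_(j < n) tensmx (delta_mx 0 j : 'M[R]_(1, n)) (G j).

Definition Mmat (Fij : 'I_m -> 'I_n -> 'M[R]_p) : 'M[R]_(m * p + n * p) :=
  block_mx 0 (Gamma Fij) (Gamma Fij)^T 0.

Definition wvec (x : 'cV[R]_m) (y : 'cV[R]_n) : 'M[R]_(m * p + n * p, 1 * p) :=
  col_mx (tensmx x (1%:M : 'M[R]_p)) (tensmx y (1%:M : 'M[R]_p)).

End Construction.

Definition posPart (R : realFieldType) (k : nat) (D : 'M[R]_k) : 'M[R]_k :=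
  \matrix_(i, j) Num.max (D i j) 0.

(* Splitting D into its nonnegative and nonpositive parts writes M as M1 - M2
   with M1, M2 psd.  For w = (x (x) I; y (x) I), the antidiagonal block structure
   of M gives w^T M w = X + X^T with X = (x (x) I)^T Gamma (y (x) I), which is
   1/2 sum x_i y_j F_ij, so X + X^T is the bilinear part of B because the F_ij
   are symmetric, while (Omega1 Omega2) w is its linear part.  For convexity,
   w is linear in z = (x, y), and for psd P the map Q u = u^T P u satisfies
   t Q a + (1 - t) Q b - Q (t a + (1 - t) b) = t (1 - t) Q (a - b),
   which is psd; affine terms do not change this gap. *)

From HB Require Import structures.
From mathcomp Require Import all_boot all_order all_algebra.
From mathcomp.real_closed Require Import mxtens.
From mathcomp Require Import ring.
Import Order.TTheory GRing.Theory Num.Theory.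
Local Open Scope ring_scope.
Set Implicit Arguments. Unset Strict Implicit. Unset Printing Implicit Defensive.

Section CastLinear.
Variables (R : pzRingType) (m n m' n' : nat) (e : (m = m') * (n = n')).

Fact castmx_is_linear : linear (@castmx R m n m' n' e).
Proof. by move=> a A B; apply/matrixP=> i j; rewrite !(castmxE, mxE). Qed.

HB.instance Definition _ :=
  GRing.isLinear.Build R 'M[R]_(m, n) 'M[R]_(m', n') _ (castmx e) castmx_is_linear.

End CastLinear.

Lemma castmx_trmx (R : Type) k l (e : k = l) (A : 'M[R]_k) :
  castmx (e, e) A^T = (castmx (e, e) A)^T.
Proof. by rewrite trmx_cast. Qed.

Section TensLinear.
Variables (R : pzRingType) (m n p q : nat).

Lemma tensmxDl (A B : 'M[R]_(m, n)) (C : 'M[R]_(p, q)) :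
  (A + B) *t C = A *t C + B *t C.
Proof. by apply/matrixP=> i j; rewrite !mxE mulrDl. Qed.

Lemma tensmxZl c (A : 'M[R]_(m, n)) (C : 'M[R]_(p, q)) :
  (c *: A) *t C = c *: (A *t C).
Proof. by apply/matrixP=> i j; rewrite !mxE mulrA. Qed.

End TensLinear.

Lemma castmx_tens11 (R : comPzRingType) p q (a : 'M[R]_1) (A : 'M[R]_(p, q)) :
  castmx (mul1n p, mul1n q) (a *t A) = a 0 0 *: A.
Proof. by rewrite {1}[a]mx11_scalar tens_scalar_mx castmx_comp castmx_id. Qed.

Section Psd.
Variable R : realFieldType.

Lemma psd_castmx k l (e : k = l) (A : 'M[R]_k) : psd A -> psd (castmx (e, e) A).
Proof. by case: l / e; rewrite castmx_id. Qed.

Lemma psdZ k c (A : 'M[R]_k) : 0 <= c -> psd A -> psd (c *: A).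
Proof.
move=> c_ge0 [symA posA]; split=> [|v]; first by rewrite linearZ /= symA.
by rewrite -scalemxAr -scalemxAl mxE mulr_ge0.
Qed.

Lemma psd_congr k q (P : 'M[R]_k) (L : 'M[R]_(k, q)) : psd P -> psd (L^T *m P *m L).
Proof.
move=> [symP posP]; split=> [|v]; first by rewrite !trmx_mul trmxK symP mulmxA.
by have := posP (L *m v); rewrite trmx_mul !mulmxA.
Qed.

Lemma psd_diag_mx k (d : 'rV[R]_k) : (forall j, 0 <= d 0 j) -> psd (diag_mx d).
Proof.
move=> d_ge0; split=> [|v]; first by rewrite tr_diag_mx.
rewrite mul_mx_diag mxE; apply: sumr_ge0 => j _.
by rewrite !mxE mulrAC -expr2 mulr_ge0 ?sqr_ge0.
Qed.

Lemma posPart_diag_mx k (d : 'rV[R]_k) :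
  posPart (diag_mx d) = diag_mx (\row_j Num.max (d 0 j) 0).
Proof.
apply/matrixP=> i j; rewrite !mxE.
by case: eqP => [->|_]; rewrite ?mulr1n ?mulr0n // maxxx.
Qed.

Lemma psd_posPart k (D : 'M[R]_k) : is_diag_mx D -> psd (posPart D).
Proof.
case/diag_mxP=> d ->; rewrite posPart_diag_mx.
by apply: psd_diag_mx => j; rewrite mxE le_max lexx orbT.
Qed.

Lemma psd_posPart_sub k (D : 'M[R]_k) : is_diag_mx D -> psd (posPart D - D).
Proof.
case/diag_mxP=> d ->; rewrite posPart_diag_mx -linearB /=.
by apply: psd_diag_mx => j; rewrite !mxE subr_ge0 le_max lexx.
Qed.

End Psd.

Section PsdConvex.
Variables (R : realFieldType) (N : nat) (K : 'cV[R]_N -> Prop).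

Definition affine (V : lmodType R) (f : 'cV[R]_N -> V) :=
  forall a b t, f (t *: a + (1 - t) *: b) = t *: f a + (1 - t) *: f b.

Lemma affine_comp (U V : lmodType R) (f : {linear U -> V}) (g : 'cV[R]_N -> U) :
  affine g -> affine (fun z => f (g z)).
Proof. by move=> affg a b t; rewrite affg linearD !linearZ. Qed.

Lemma affine_addr (V : lmodType R) (f : 'cV[R]_N -> V) c :
  affine f -> affine (fun z => f z + c).
Proof.
move=> afff a b t; rewrite afff !scalerDr addrACA -scalerDl.
by rewrite [t + _]addrC subrK scale1r.
Qed.

Lemma quad_convex_gap k q (P : 'M[R]_k) (a b : 'M[R]_(k, q)) t :
  let Q u := u^T *m P *m u in
  t *: Q a + (1 - t) *: Q b - Q (t *: a + (1 - t) *: b)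
    = (t * (1 - t)) *: Q (a - b).
Proof.
rewrite /= !linearD !linearN !linearZ /= !mulmxDl ?mulmxDr ?mulNmx ?mulmxN.
rewrite -!scalemxAl ?linearZ /=.
move: (a^T *m P *m a) (a^T *m P *m b) (b^T *m P *m a) (b^T *m P *m b) => X Y Z W.
by apply/matrixP=> i j; rewrite !mxE; ring.
Qed.

Lemma eq_psd_convex_on p (C1 C2 : 'cV[R]_N -> 'M[R]_p) :
  C1 =1 C2 -> psd_convex_on K C1 -> psd_convex_on K C2.
Proof. by move=> eqC convC z1 z2 Kz1 Kz2 t; rewrite -!eqC; apply: convC. Qed.

Lemma psd_convex_on_quad k q (P : 'M[R]_k) (L : 'cV[R]_N -> 'M[R]_(k, q)) :
  psd P -> affine L -> psd_convex_on K (fun z => (L z)^T *m P *m L z).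
Proof.
move=> psdP affL z1 z2 _ _ t t_gt0 t_lt1; rewrite /loewner_le affL quad_convex_gap.
by apply: psdZ; [rewrite mulr_ge0 ?subr_ge0 ?ltW | apply: psd_congr].
Qed.

Lemma psd_convex_on_castmx k l (e : k = l) (C : 'cV[R]_N -> 'M[R]_k) :
  psd_convex_on K C -> psd_convex_on K (fun z => castmx (e, e) (C z)).
Proof.
move=> convC z1 z2 Kz1 Kz2 t t_gt0 t_lt1; rewrite /loewner_le -!linearZ -linearD -linearB.
exact/psd_castmx/convC.
Qed.

Lemma psd_convex_onD p (C A : 'cV[R]_N -> 'M[R]_p) :
  psd_convex_on K C -> affine A -> psd_convex_on K (fun z => C z + A z).
Proof.
move=> convC affA z1 z2 Kz1 Kz2 t t_gt0 t_lt1; rewrite /loewner_le affA !scalerDr.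
by rewrite addrACA [C _ + _]addrC addrKA; apply: convC.
Qed.

End PsdConvex.

Section Decomposition.
Variables (R : realFieldType) (p : nat).
Local Notation cast1 := (castmx (mul1n p, mul1n p)).
Local Notation I := (1%:M : 'M[R]_p).

Lemma quad_block_antidiag k l q (A : 'M[R]_(k, l)) (X : 'M[R]_(k, q)) (Y : 'M[R]_(l, q)) :
  (col_mx X Y)^T *m block_mx 0 A A^T 0 *m col_mx X Y
    = X^T *m A *m Y + (X^T *m A *m Y)^T.
Proof.
rewrite tr_col_mx mul_row_block !mulmx0 add0r addr0 mul_row_col addrC.
by rewrite !trmx_mul trmxK mulmxA.
Qed.

Lemma affine_wvec m n : affine (fun z : 'cV[R]_(m + n) => wvec p (usubmx z) (dsubmx z)).
Proof.
move=> a b t; rewrite /wvec !linearD !linearZ /= !tensmxDl !tensmxZl.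
by rewrite !scale_col_mx add_col_mx.
Qed.

Lemma Omega1_tens m (H : 'I_m -> 'M[R]_p) (x : 'cV[R]_m) :
  cast1 (Omega1 H *m (x *t I)) = \sum_(i < m) x i 0 *: H i.
Proof.
rewrite /Omega1 mulmx_suml linear_sum; apply: eq_bigr => i _ /=.
by rewrite tensmx_mul castmx_tens11 mulmx1 -rowE mxE.
Qed.

Lemma Gamma_tens m n (Fij : 'I_m -> 'I_n -> 'M[R]_p) (x : 'cV[R]_m) (y : 'cV[R]_n) :
  cast1 ((x *t I)^T *m Gamma Fij *m (y *t I))
    = \sum_(i < m) \sum_(j < n) (x i 0 * y j 0 / 2) *: Fij i j.
Proof.
rewrite /Gamma mulmx_sumr mulmx_suml linear_sum; apply: eq_bigr => i _ /=.
rewrite mulmx_sumr mulmx_suml linear_sum; apply: eq_bigr => j _ /=.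
rewrite trmx_tens !tensmx_mul castmx_tens11 trmx1 mul1mx mulmx1 scalerA.
congr (_ *: _); rewrite -(mul_delta_mx (0 : 'I_1)) mulmxA -colE -mulmxA -rowE.
by rewrite mxE big_ord1 !mxE.
Qed.

Lemma Bfun_wvec m n F (H : 'I_m -> 'M[R]_p) (G : 'I_n -> 'M[R]_p) Fij x y :
  (forall i j, (Fij i j)^T = Fij i j) ->
  Bfun F H G Fij x y = F + cast1 (row_mx (Omega1 H) (Omega2 G) *m wvec p x y)
                         + cast1 ((wvec p x y)^T *m Mmat Fij *m wvec p x y).
Proof.
move=> symFij; rewrite /wvec /Mmat quad_block_antidiag mul_row_col !linearD /=.
rewrite !Omega1_tens Gamma_tens castmx_trmx Gamma_tens linear_sum -big_split /=.
rewrite /Bfun -!addrA; do 3 congr (_ + _).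
apply: eq_bigr => i _; rewrite linear_sum -big_split; apply: eq_bigr => j _ /=.
by rewrite linearZ /= symFij -scalerDl -splitr.
Qed.

End Decomposition.

Unset Implicit Arguments. Set Strict Implicit.

Theorem theorem7 (R : realFieldType) (m n p : nat)
  (F : 'M[R]_p) (H : 'I_m -> 'M[R]_p) (G : 'I_n -> 'M[R]_p)
  (Fij : 'I_m -> 'I_n -> 'M[R]_p)
  (hF : F^T = F) (hH : forall i, (H i)^T = H i) (hG : forall j, (G j)^T = G j)
  (hFij : forall i j, (Fij i j)^T = Fij i j)
  (V D : 'M[R]_(m * p + n * p))
  (hV : V^T *m V = 1%:M) (hD : is_diag_mx D)
  (hM : Mmat Fij = V^T *m D *m V) :
  let Dp := posPart D in
  let Dm := Dp - D in
  let M1 := V^T *m Dp *m V in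
  let M2 := V^T *m Dm *m V in
  let Bp := fun (x : 'cV[R]_m) (y : 'cV[R]_n) =>
    castmx (mul1n p, mul1n p)
      ((wvec p x y)^T *m M1 *m wvec p x y
       + row_mx (Omega1 H) (Omega2 G) *m wvec p x y) + F in
  let Bm := fun (x : 'cV[R]_m) (y : 'cV[R]_n) =>
    castmx (mul1n p, mul1n p) ((wvec p x y)^T *m M2 *m wvec p x y) in
  (forall (x : 'cV[R]_m) (y : 'cV[R]_n), Bfun F H G Fij x y = Bp x y - Bm x y) /\
  psd_convex_on (fun _ => True) (fun z : 'cV[R]_(m + n) => Bp (usubmx z) (dsubmx z)) /\
  psd_convex_on (fun _ => True) (fun z : 'cV[R]_(m + n) => Bm (usubmx z) (dsubmx z)).
Proof.
move=> Dp Dm M1 M2 Bp Bm.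
have M1_subM2 : M1 - M2 = Mmat Fij by rewrite hM -mulmxBl -mulmxBr subKr.
have psdM1 : psd M1 by apply/psd_congr/psd_posPart.
have psdM2 : psd M2 by apply/psd_congr/psd_posPart_sub.
have affw := @affine_wvec R p m n.
split=> [x y|].
  rewrite Bfun_wvec // -M1_subM2 mulmxBr mulmxBl /Bp /Bm !linearD linearN /=.
  by apply/matrixP=> i j; rewrite !mxE; ring.
split.
  apply: (eq_psd_convex_on (C1 := fun z => _ + (_ + F))) => [z|].
    by rewrite /Bp linearD addrA.
  apply: psd_convex_onD; first exact/psd_convex_on_castmx/psd_convex_on_quad.
  by apply/affine_addr/affine_comp/affine_comp.
exact/psd_convex_on_castmx/psd_convex_on_quad.
Qed.
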